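(* For every positive integer $n$ there exist integers $R$ and $m$ and a finite set $\Lambda\subset\mathbb{N}^m$ such that the following holds. If $G$ is a simply connected, simple, compact Lie group of rank $r\ge R$ and $\lambda$ is a dominant weight with $\chi_\lambda(1)\le r^n$, then either $G$ is of type $A_r$ and $$\lambda=a_1\varpi_1+\cdots+a_m\varpi_m+b_m\varpi_{r+1-m}+\cdots+b_1\varpi_r$$ for some $(a_1,\ldots,a_m),(b_1,\ldots,b_m)\in\Lambda$, or $G$ is of type $B_r$, $C_r$ or $D_r$ and $$\lambda=a_1\varpi_1+\cdots+a_m\varpi_m$$ for some $(a_1,\ldots,a_m)\in\Lambda$.
   Context: A compact Lie group is called simple if it is connected, has finite center, and is a simple group modulo its center. $\varpi_1,\ldots,\varpi_r$ are the fundamental weights, with simple roots numbered as in Bourbaki (for $A_r,B_r,C_r,D_r$, $\alpha_1$ is at the end of the Dynkin diagram away from the branch/double bond, $\alpha_i$ adjacent to $\alpha_{i+1}$). $\chi_\lambda$ denotes the irreducible character of $G$ with highest weight $\lambda$. $\mathbb{N}$ denotes the non-negative integers. *)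

From mathcomp Require Import all_boot all_order all_algebra.
Set Implicit Arguments. Unset Strict Implicit. Unset Printing Implicit Defensive.
Import Order.TTheory GRing.Theory Num.Theory.
Local Open Scope ring_scope.

(* Types of the classical simply connected simple compact Lie groups.
   (Exceptional types have rank <= 8.) *)
Inductive classical_type := TA | TB | TC | TD.

(* Standard (Bourbaki) realization of the root system in Q^N, N = ambient_dim,
   with orthonormal basis e_0, ..., e_(N-1). *)
Definition ambient_dim (t : classical_type) (r : nat) : nat :=
  if t is TA then r.+1 else r.

Definition vec := nat -> rat.

Definition eps (i : nat) : vec := fun x => (x == i)%:R.

Definition dotv (t : classical_type) (r : nat) (u v : vec) : rat :=
  \sum_(x < ambient_dim t r) u x * v x.

(* Fundamental weight varpi_(k+1) (0-indexed k), Bourbaki plates I-IV, in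
   e-coordinates.  For A_r we use e_1+...+e_k, which differs from Bourbaki's
   varpi_k by a multiple of e_1+...+e_(r+1), orthogonal to all roots. *)
Definition fundw (t : classical_type) (r k : nat) : vec := fun x =>
  match t with
  | TA | TC => if (x <= k)%N then 1 else 0
  | TB => if k.+1 == r then (if (x < r)%N then 1/2 else 0)
          else if (x <= k)%N then 1 else 0
  | TD => if k.+1 == r then (if (x < r)%N then 1/2 else 0)
          else if k.+2 == r then
            (if (x < r.-1)%N then 1/2 else if x == r.-1 then -(1/2) else 0)
          else if (x <= k)%N then 1 else 0
  end.

Definition ijpairs (N : nat) : seq (nat * nat) :=
  [seq (i, j) | i <- iota 0 N, j <- iota i.+1 (N - i.+1)].

Definition posroots (t : classical_type) (r : nat) : seq vec :=
  let P := ijpairs (ambient_dim t r) in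
  [seq (fun x => eps p.1 x - eps p.2 x) | p <- P]
  ++ (if t is TA then [::] else [seq (fun x => eps p.1 x + eps p.2 x) | p <- P])
  ++ (match t with
      | TB => [seq eps i | i <- iota 0 r]
      | TC => [seq (fun x => 2 * eps i x) | i <- iota 0 r]
      | _ => [::]
      end).

Definition weightv (t : classical_type) (r : nat) (c : 'I_r -> nat) : vec :=
  fun x => \sum_(k < r) (c k)%:R * fundw t r k x.

(* chi_lambda(1) for lambda = sum_k lam_k varpi_(k+1), by the Weyl dimension
   formula  prod_(alpha > 0) (lambda + rho, alpha) / (rho, alpha). *)
Definition weyl_dim (t : classical_type) (r : nat) (lam : 'I_r -> nat) : rat :=
  \prod_(al <- posroots t r)
     (dotv t r (@weightv t r (fun k => (lam k).+1)) al
      / dotv t r (@weightv t r (fun _ : 'I_r => 1%N)) al).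

From mathcomp Require Import all_boot all_order all_algebra.
From mathcomp Require Import zify lra.
Set Implicit Arguments. Unset Strict Implicit. Unset Printing Implicit Defensive.
Import Order.TTheory GRing.Theory Num.Theory.
Local Open Scope ring_scope.

(* Each factor (lambda + rho, alpha) / (rho, alpha) of the Weyl dimension formula is at
   least 1, and for alpha = e_i - e_j it equals 1 + (lambda_i + ... + lambda_(j-1)) / (j - i).
   Suppose lambda_k > 0.  In the row of roots e_i - e_j with i <= k < j the factors telescope,
   so the row contributes at least about (N - i) / (k + 2 - i); n + 1 rows just below k, or
   n + 1 columns just above k, then give chi_lambda(1) >= (r / (2n + 6))^(n + 1) > r^n as soon
   as r > (2n + 6)^(n + 1).  This fails only when k is within n + 1 of the end of the diagram:
   for B, C, D that end is handled by the roots e_i + e_j instead, for A it is the other end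
   of the weight.  Near an end, a coefficient lambda_k > n gives the same bound from a single
   row or column.  So lambda lives on the first (for A, also the last) n + 1 nodes with
   coefficients at most n. *)

Section ProductBounds.
Variable R : realFieldType.
Implicit Types (F : nat -> R) (a b c d D L N : nat).

Lemma prodr_ge1 (I : Type) (s : seq I) (P : pred I) (F : I -> R) :
  (forall i, P i -> 1 <= F i) -> 1 <= \prod_(i <- s | P i) F i.
Proof.
move=> F_ge1; apply: (big_ind (fun x => 1 <= x)) => // x y x_ge1 y_ge1.
by rewrite -[1]mulr1 ler_pM.
Qed.

Lemma ler_prod_subpred (I : Type) (s : seq I) (P Q : pred I) (F : I -> R) :
  (forall i, P i -> Q i) -> (forall i, Q i -> 1 <= F i) ->
  \prod_(i <- s | P i) F i <= \prod_(i <- s | Q i) F i.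
Proof.
move=> PQ F_ge1; rewrite [X in _ <= X](bigID P) /=.
rewrite (eq_bigl P) => [|i]; last by case: (boolP (P i)) => [/PQ ->|]; rewrite ?andbF.
have P_ge1 : 1 <= \prod_(i <- s | P i) F i by apply: prodr_ge1 => i /PQ /F_ge1.
rewrite ler_peMr ?(le_trans ler01) //.
by apply: prodr_ge1 => i /andP[/F_ge1].
Qed.

Lemma ler_prod_subrange a b N F : (b <= N)%N ->
  (forall i, (i < N)%N -> 1 <= F i) ->
  \prod_(a <= i < b) F i <= \prod_(0 <= i < N) F i.
Proof.
move=> le_bN F_ge1; rewrite (big_nat_widenl _ 0) // (big_nat_widen _ _ N) //.
rewrite big_nat_cond [X in _ <= X]big_nat_cond.
apply: ler_prod_subpred => i /andP[iN _]; first by rewrite iN.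
by move: iN => /andP[_ /F_ge1].
Qed.

Lemma prod_nat_ge1 N F : (forall i, (i < N)%N -> 1 <= F i) -> 1 <= \prod_(0 <= i < N) F i.
Proof. by move=> F_ge1; rewrite big_nat_cond prodr_ge1 // => i /andP[/andP[_ /F_ge1]]. Qed.

Lemma ler_prod_subrect a b c d N (H : nat -> nat -> R) :
  (b <= N)%N -> (d <= N)%N ->
  (forall i j, (i < N)%N -> (j < N)%N -> 1 <= H i j) ->
  \prod_(a <= i < b) \prod_(c <= j < d) H i j <=
  \prod_(0 <= i < N) \prod_(0 <= j < N) H i j.
Proof.
move=> le_bN le_dN H_ge1.
have rows_ge1 i : (i < N)%N -> 1 <= \prod_(0 <= j < N) H i j.
  by move=> lt_iN; apply: prod_nat_ge1 => j; apply: H_ge1.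
apply: (le_trans _ (ler_prod_subrange a le_bN rows_ge1)).
rewrite big_nat_cond [X in _ <= X]big_nat_cond; apply: ler_prod.
move=> i /andP[/andP[_ lt_ib] _]; have lt_iN : (i < N)%N by lia.
rewrite ler_prod_subrange // => [|j /(H_ge1 _ _ lt_iN)//].
rewrite andbT big_nat_cond prodr_ge0 // => j /andP[/andP[_ lt_jd] _].
by rewrite (le_trans ler01) // H_ge1 //; lia.
Qed.

Lemma prodr_ge_expn a b F (x : R) : 0 <= x ->
  (forall i, (a <= i < b)%N -> x <= F i) -> x ^+ (b - a) <= \prod_(a <= i < b) F i.
Proof.
move=> x_ge0 le_xF; rewrite -prodr_const_nat big_nat_cond [X in _ <= X]big_nat_cond.
by apply: ler_prod => i /andP[/le_xF -> _]; rewrite x_ge0.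
Qed.

Lemma ler_pdivn (x y u v : nat) : (0 < y)%N -> (0 < v)%N -> (x * v <= u * y)%N ->
  x%:R / y%:R <= u%:R / v%:R :> R.
Proof.
move=> y_gt0 v_gt0 le_xv_uy.
by rewrite ler_pdivrMr ?ltr0n // mulrAC ler_pdivlMr ?ltr0n // -!natrM ler_nat.
Qed.

Lemma prod_telescope_nat b D : (0 < b)%N ->
  \prod_(0 <= s < D) ((b + s).+1%:R / (b + s)%:R : R) = (b + D)%:R / b%:R.
Proof.
move=> b_gt0; elim: D => [|D IH]; first by rewrite big_geq // addn0 divff // pnatr_eq0 -lt0n.
by rewrite big_nat_recr //= IH addnS mulrC mulrA divfK // pnatr_eq0; lia.
Qed.

(* Both sides telescope to the same ratio of rising factorials. *)
Lemma prod_shifted_ratio a L D : (0 < a)%N ->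
  \prod_(0 <= s < L) (1 + D%:R / (a + s)%:R : R)
  = \prod_(0 <= t < D) ((a + t + L)%:R / (a + t)%:R).
Proof.
move=> a_gt0; transitivity
  (\prod_(0 <= s < L) \prod_(0 <= t < D) ((a + s + t).+1%:R / (a + s + t)%:R : R)).
  apply: eq_bigr => s _; rewrite prod_telescope_nat; last lia.
  by rewrite [in RHS]natrD mulrDl divff // pnatr_eq0; lia.
rewrite exchange_big_nat; apply: eq_bigr => t _.
by rewrite -prod_telescope_nat; [apply: eq_bigr => s _; rewrite addnAC | lia].
Qed.

Lemma prod_ge_telescope (g : nat -> R) a L D : (0 < a)%N ->
  (forall s, (s < L)%N -> 1 + D%:R / (a + s)%:R <= g s) ->
  ((a + L)%:R / (a + D)%:R) ^+ D <= \prod_(0 <= s < L) g s.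
Proof.
move=> a_gt0 le_g; apply: (@le_trans _ _ (\prod_(0 <= s < L) (1 + D%:R / (a + s)%:R))).
  rewrite prod_shifted_ratio // -[D in _ ^+ D]subn0.
  apply: prodr_ge_expn => [|t /andP[_ lt_tD]]; first exact: divr_ge0.
  by apply: ler_pdivn; nia.
rewrite big_nat_cond [X in _ <= X]big_nat_cond; apply: ler_prod => s /andP[/andP[_ /le_g ->] _].
by rewrite andbT addr_ge0 ?divr_ge0.
Qed.

Lemma natr_expn_lt_div (r C n : nat) : (0 < C)%N -> (C ^ n.+1 < r)%N ->
  (r ^ n)%:R < (r%:R / C%:R : R) ^+ n.+1.
Proof.
move=> C_gt0 lt_Cr; rewrite expr_div_n ltr_pdivlMr ?exprn_gt0 ?ltr0n //.
rewrite -!natrX -natrM ltr_nat [(r ^ n.+1)%N]expnS [(r * _)%N]mulnC ltn_pmul2l //.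
by rewrite expn_gt0; lia.
Qed.
End ProductBounds.

Ltac case_ifs := repeat (simpl; match goal with
  | |- context [if ?b then _ else _] =>
      lazymatch b with true => fail | false => fail | _ => case: (boolP b) => ? end
  | |- context [nat_of_bool ?b] =>
      lazymatch b with true => fail | false => fail | _ => case: (boolP b) => ? end
  end).

Section FundamentalWeights.
Variables (t : classical_type) (r : nat).
Hypothesis r_gt2 : (2 < r)%N.

Lemma fundw_subE k i j : (k < r)%N -> (i < j < ambient_dim t r)%N ->
  fundw t r k i - fundw t r k j = ((i <= k < j)%N)%:R.
Proof. rewrite /fundw; case: t => /= *; case_ifs; rewrite /=; try lia; lra. Qed.

Lemma fundw_le_indicator k x : (k < r)%N -> (x < r)%N -> fundw t r k x <= (x <= k)%N%:R.
Proof. rewrite /fundw; case: t => /= *; case_ifs; rewrite /=; try lia; lra. Qed.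

Lemma fundw_ge0 k x : t <> TD -> 0 <= fundw t r k x.
Proof. rewrite /fundw; case: t => //= *; case_ifs; rewrite /=; try lia; lra. Qed.

Lemma fundw_last_gt0 x : t <> TD -> (x < r)%N -> 0 < fundw t r r.-1 x.
Proof. rewrite /fundw; case: t => //= *; case_ifs; rewrite /=; try lia; lra. Qed.

Hypothesis t_neqA : t <> TA.

Lemma fundw_add_ge0 k i j : (k < r)%N -> (i < j < r)%N -> 0 <= fundw t r k i + fundw t r k j.
Proof. move: t_neqA; rewrite /fundw; case: t => //= *; case_ifs; rewrite /=; try lia; lra. Qed.

Lemma fundw_last_add_ge1 i j : (i < j < r)%N -> 1 <= fundw t r r.-1 i + fundw t r r.-1 j.
Proof. move: t_neqA; rewrite /fundw; case: t => //= *; case_ifs; rewrite /=; try lia; lra. Qed.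

Lemma fundw_add_ge1 k i j : (k < r)%N -> (i <= k)%N -> (i < j)%N -> (j.+2 <= r)%N ->
  1 <= fundw t r k i + fundw t r k j.
Proof. move: t_neqA; rewrite /fundw; case: t => //= *; case_ifs; rewrite /=; try lia; lra. Qed.

End FundamentalWeights.

Lemma sum_indicator_nat (R : numDomainType) r i j : (j <= r)%N ->
  \sum_(k < r) ((i <= k < j)%N)%:R = (j - i)%:R :> R.
Proof.
move=> le_jr; rewrite -sumr_const_nat (big_nat_widenl _ 0) // (big_nat_widen _ _ r) //.
rewrite big_mkcond big_mkord; apply: eq_bigr => k _ /=.
by case: (i <= k)%N; case: (k < j)%N.
Qed.

Lemma ler_sum_term (R : numDomainType) (I : finType) (F : I -> R) k0 :
  (forall k, 0 <= F k) -> F k0 <= \sum_k F k.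
Proof. by move=> F_ge0; rewrite (bigD1 k0) //= lerDl sumr_ge0. Qed.

Lemma sum_mul_eps N (u : vec) i : (i < N)%N -> \sum_(x < N) u x * eps i x = u i.
Proof.
move=> lt_iN; rewrite (bigD1 (Ordinal lt_iN)) //= /eps eqxx mulr1 big1 ?addr0 // => x ne_xi.
by have /negbTE -> : (x != i :> nat) := ne_xi; rewrite mulr0.
Qed.

Definition sub_root (i j : nat) : vec := fun x => eps i x - eps j x.
Definition add_root (i j : nat) : vec := fun x => eps i x + eps j x.
Definition rho (t : classical_type) (r : nat) : vec := @weightv t r (fun _ => 1%N).

Section Pairings.
Variables (t : classical_type) (r : nat).
Local Notation N := (ambient_dim t r).
Implicit Types (u : vec) (c : 'I_r -> nat).

Lemma dotv_eps u i : (i < N)%N -> dotv t r u (eps i) = u i.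
Proof. exact: sum_mul_eps. Qed.

Lemma dotv_sub_root u i j : (i < N)%N -> (j < N)%N -> dotv t r u (sub_root i j) = u i - u j.
Proof.
by move=> *; rewrite /dotv /sub_root; under eq_bigr do rewrite mulrBr; rewrite sumrB !sum_mul_eps.
Qed.

Lemma dotv_add_root u i j : (i < N)%N -> (j < N)%N -> dotv t r u (add_root i j) = u i + u j.
Proof.
by move=> *; rewrite /dotv /add_root; under eq_bigr do rewrite mulrDr; rewrite big_split !sum_mul_eps.
Qed.

Lemma dotv_2eps u i : (i < N)%N -> dotv t r u (fun x => 2 * eps i x) = 2 * u i.
Proof.
by move=> *; rewrite /dotv; under eq_bigr do rewrite mulrCA; rewrite -mulr_sumr sum_mul_eps.
Qed.

Lemma dotv_weight_succ c al :
  dotv t r (weightv t (fun k => (c k).+1)) al = dotv t r (weightv t c) al + dotv t r (rho t r) al.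
Proof.
rewrite /dotv -big_split; apply: eq_bigr => x _ /=; rewrite -mulrDl; congr (_ * _).
by rewrite /weightv -big_split; apply: eq_bigr => k _ /=; rewrite -mulrDl -natrD addn1.
Qed.

Hypothesis r_gt2 : (2 < r)%N.

Lemma dotv_weight_sub_root c i j : (i < j < N)%N ->
  dotv t r (weightv t c) (sub_root i j) = \sum_(k < r) (c k)%:R * ((i <= k < j)%N)%:R.
Proof.
move=> lt_ijN; rewrite dotv_sub_root; try lia.
by rewrite /weightv -sumrB; apply: eq_bigr => k _; rewrite -mulrBr fundw_subE ?ltn_ord.
Qed.

Lemma dotv_weight_sub_root_ge0 c i j : (i < j < N)%N -> 0 <= dotv t r (weightv t c) (sub_root i j).
Proof. by move=> lt_ijN; rewrite dotv_weight_sub_root // sumr_ge0 // => k _; rewrite mulr_ge0. Qed.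

Lemma dotv_weight_sub_root_ge_coef c i j (k : 'I_r) : (i <= k < j)%N -> (j < N)%N ->
  (c k)%:R <= dotv t r (weightv t c) (sub_root i j).
Proof.
move=> ikj lt_jN; rewrite dotv_weight_sub_root; last lia.
apply: (le_trans _ (ler_sum_term k _)) => [|k']; last by rewrite mulr_ge0.
by rewrite ikj mulr1.
Qed.

Lemma dotv_rho_sub_root i j : (i < j < N)%N -> dotv t r (rho t r) (sub_root i j) = (j - i)%:R.
Proof.
move=> lt_ijN; rewrite dotv_weight_sub_root //; under eq_bigr do rewrite mul1r.
by apply: sum_indicator_nat; case: t lt_ijN => /=; lia.
Qed.

Lemma dotv_weight_eps_ge0 c i : t <> TD -> (i < N)%N -> 0 <= dotv t r (weightv t c) (eps i).
Proof.
by move=> t_neqD lt_iN; rewrite dotv_eps // sumr_ge0 // => k _; rewrite mulr_ge0 ?fundw_ge0.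
Qed.

Lemma dotv_rho_eps_gt0 i : t <> TD -> (i < r)%N -> 0 < dotv t r (rho t r) (eps i).
Proof.
move=> t_neqD lt_ir; rewrite dotv_eps; last by case: t t_neqD => /=; lia.
have lt_r1r : (r.-1 < r)%N by lia.
apply: (lt_le_trans _ (ler_sum_term (Ordinal lt_r1r) _)) => [|k]; rewrite mul1r.
  exact: fundw_last_gt0.
exact: fundw_ge0.
Qed.

Hypothesis t_neqA : t <> TA.

Lemma ambient_dim_neqA : N = r.
Proof. by case: t t_neqA. Qed.

Lemma dotv_weight_add_root c i j : (i < j < r)%N ->
  dotv t r (weightv t c) (add_root i j) = \sum_(k < r) (c k)%:R * (fundw t r k i + fundw t r k j).
Proof.
move=> lt_ijr; rewrite dotv_add_root ?ambient_dim_neqA; try lia.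
by rewrite /weightv -big_split; apply: eq_bigr => k _; rewrite mulrDr.
Qed.

Lemma dotv_weight_add_root_ge0 c i j : (i < j < r)%N -> 0 <= dotv t r (weightv t c) (add_root i j).
Proof.
by move=> lt_ijr; rewrite dotv_weight_add_root // sumr_ge0 // => k _; rewrite mulr_ge0 ?fundw_add_ge0.
Qed.

Lemma dotv_weight_add_root_ge_coef c i j (k : 'I_r) : (i <= k)%N -> (i < j)%N -> (j.+2 <= r)%N ->
  (c k)%:R <= dotv t r (weightv t c) (add_root i j).
Proof.
move=> le_ik lt_ij le_j2r; rewrite dotv_weight_add_root; last lia.
apply: (le_trans _ (ler_sum_term k _)) => [|k']; last by rewrite mulr_ge0 ?fundw_add_ge0 //; lia.
by rewrite ler_peMr ?fundw_add_ge1.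
Qed.

Lemma dotv_rho_add_root_gt0 i j : (i < j < r)%N -> 0 < dotv t r (rho t r) (add_root i j).
Proof.
move=> lt_ijr; rewrite dotv_weight_add_root //; have lt_r1r : (r.-1 < r)%N by lia.
apply: (lt_le_trans _ (ler_sum_term (Ordinal lt_r1r) _)) => [|k]; rewrite mul1r.
  by rewrite (lt_le_trans ltr01) // fundw_last_add_ge1.
exact: fundw_add_ge0.
Qed.

Lemma dotv_rho_add_root_le i j : (i < j < r)%N ->
  dotv t r (rho t r) (add_root i j) <= ((r - i) + (r - j))%:R.
Proof.
move=> lt_ijr; rewrite dotv_weight_add_root // natrD -!(@sum_indicator_nat _ r _ r) //.
rewrite -big_split ler_sum // => k _; rewrite mul1r ltn_ord !andbT.
by rewrite lerD ?fundw_le_indicator //; lia.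
Qed.

End Pairings.

Definition weyl_factor t r (lam : 'I_r -> nat) (al : vec) : rat :=
  dotv t r (weightv t (fun k => (lam k).+1)) al / dotv t r (rho t r) al.

Lemma weyl_factor_ge t r (lam : 'I_r -> nat) al (D h : rat) :
  0 <= D <= dotv t r (weightv t lam) al -> 0 < dotv t r (rho t r) al <= h ->
  1 + D / h <= weyl_factor t lam al.
Proof.
rewrite /weyl_factor dotv_weight_succ; set L := dotv _ _ _ _; set P := dotv _ _ _ _.
move=> /andP[D_ge0 le_DL] /andP[P_gt0 le_Ph].
rewrite mulrDl divff ?gt_eqF // [_ + 1]addrC lerD2l; apply: (le_trans _ (ler_wpM2r _ le_DL)).
  by apply: ler_wpM2l => //; rewrite lef_pV2 ?posrE // (lt_le_trans P_gt0).
by rewrite invr_ge0 ltW.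
Qed.

Lemma weyl_factor_ge1 t r (lam : 'I_r -> nat) al :
  0 <= dotv t r (weightv t lam) al -> 0 < dotv t r (rho t r) al -> 1 <= weyl_factor t lam al.
Proof.
move=> L_ge0 P_gt0; have := @weyl_factor_ge t r lam al 0 (dotv t r (rho t r) al).
by rewrite mul0r addr0 lexx L_ge0 P_gt0; apply.
Qed.

(* Factors are indexed by all pairs (i, j) and trivial unless i < j, so that the product
   over a rectangle of indices makes sense. *)
Definition sub_factor t r (lam : 'I_r -> nat) i j :=
  if (i < j)%N then weyl_factor t lam (sub_root i j) else 1.
Definition add_factor t r (lam : 'I_r -> nat) i j :=
  if (i < j)%N then weyl_factor t lam (add_root i j) else 1.

Definition sub_roots_prod t r (lam : 'I_r -> nat) :=
  \prod_(0 <= i < ambient_dim t r) \prod_(0 <= j < ambient_dim t r) sub_factor t lam i j.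
Definition add_roots_prod t r (lam : 'I_r -> nat) :=
  \prod_(0 <= i < r) \prod_(0 <= j < r) add_factor t lam i j.

Definition eps_roots t r : seq vec :=
  match t with
  | TB => [seq eps i | i <- iota 0 r]
  | TC => [seq (fun x => 2 * eps i x) | i <- iota 0 r]
  | _ => [::]
  end.

Lemma prod_ijpairs (R : pzSemiRingType) N (g : nat -> nat -> R) :
  \prod_(p <- ijpairs N) g p.1 p.2 =
  \prod_(0 <= i < N) \prod_(0 <= j < N) (if (i < j)%N then g i j else 1).
Proof.
rewrite /ijpairs big_allpairs_dep /= -{1}(subn0 N).
apply: eq_big_nat => i /andP[_ lt_iN].
rewrite [RHS](big_cat_nat (leq0n i.+1) lt_iN) /= [X in _ = X * _]big1_seq ?mul1r => [|j].
  by apply: eq_big_nat => j /andP[-> _].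
by rewrite mem_index_iota ltnS ltnNge => /andP[_ /andP[_ ->]].
Qed.

Lemma prod_factor_ijpairs t r (lam : 'I_r -> nat) N (f : nat -> nat -> vec) :
  \prod_(al <- [seq f p.1 p.2 | p <- ijpairs N]) weyl_factor t lam al =
  \prod_(0 <= i < N) \prod_(0 <= j < N) (if (i < j)%N then weyl_factor t lam (f i j) else 1).
Proof. by rewrite big_map (prod_ijpairs _ (fun i j => weyl_factor t lam (f i j))). Qed.

Lemma weyl_dimE t r (lam : 'I_r -> nat) : weyl_dim t lam =
  sub_roots_prod t lam * ((if t is TA then 1 else add_roots_prod t lam) *
    \prod_(al <- eps_roots t r) weyl_factor t lam al).
Proof.
have -> : weyl_dim t lam = \prod_(al <- posroots t r) weyl_factor t lam al by [].
rewrite /posroots !big_cat (prod_factor_ijpairs _ _ _ sub_root).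
by case: t; rewrite /= ?big_nil ?(prod_factor_ijpairs _ _ _ add_root).
Qed.

Section FactorBounds.
Variables (t : classical_type) (r : nat) (lam : 'I_r -> nat).
Hypothesis r_gt2 : (2 < r)%N.
Local Notation N := (ambient_dim t r).

Lemma sub_factor_ge1 i j : (j < N)%N -> 1 <= sub_factor t lam i j.
Proof.
rewrite /sub_factor; case: ifP => // lt_ij lt_jN.
by rewrite weyl_factor_ge1 ?dotv_weight_sub_root_ge0 ?dotv_rho_sub_root ?lt_ij ?ltr0n ?subn_gt0.
Qed.

Lemma sub_factor_ge i j (k : 'I_r) D : (i <= k < j)%N -> (j < N)%N -> (D <= lam k)%N ->
  1 + D%:R / (j - i)%:R <= sub_factor t lam i j.
Proof.
move=> ikj lt_jN le_D; rewrite /sub_factor ifT; last lia.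
apply: weyl_factor_ge; last by rewrite dotv_rho_sub_root ?lexx ?andbT ?ltr0n ?subn_gt0; lia.
rewrite ler0n /=; apply: (le_trans _ (dotv_weight_sub_root_ge_coef r_gt2 lam ikj lt_jN)) => //.
by rewrite ler_nat.
Qed.

Lemma add_factor_ge1 i j : t <> TA -> (j < r)%N -> 1 <= add_factor t lam i j.
Proof.
rewrite /add_factor; case: ifP => // lt_ij t_neqA lt_jr.
by rewrite weyl_factor_ge1 ?dotv_weight_add_root_ge0 ?dotv_rho_add_root_gt0 ?lt_ij.
Qed.

Lemma add_factor_ge i j (k : 'I_r) D : t <> TA -> (i <= k)%N -> (i < j)%N -> (j.+2 <= r)%N ->
  (D <= lam k)%N -> 1 + D%:R / ((r - i) + (r - j))%:R <= add_factor t lam i j.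
Proof.
move=> t_neqA le_ik lt_ij le_j2r le_D; rewrite /add_factor lt_ij.
have lt_ijr : (i < j < r)%N by lia.
apply: weyl_factor_ge; last by rewrite dotv_rho_add_root_gt0 ?dotv_rho_add_root_le.
rewrite ler0n /=.
apply: (le_trans _ (dotv_weight_add_root_ge_coef r_gt2 t_neqA lam le_ik lt_ij le_j2r)) => //.
by rewrite ler_nat.
Qed.

Lemma eps_roots_prod_ge1 : 1 <= \prod_(al <- eps_roots t r) weyl_factor t lam al.
Proof.
case: t; rewrite /= ?big_nil // big_map big_seq; apply: prodr_ge1 => i;
  rewrite mem_iota add0n => /andP[_ lt_ir]; apply: weyl_factor_ge1.
- exact: dotv_weight_eps_ge0.
- exact: dotv_rho_eps_gt0.
- by rewrite dotv_2eps // mulr_ge0 // -(@dotv_eps TC r) ?dotv_weight_eps_ge0.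
- by rewrite dotv_2eps // mulr_gt0 // -(@dotv_eps TC r) ?dotv_rho_eps_gt0.
Qed.

Lemma sub_roots_prod_ge1 : 1 <= sub_roots_prod t lam.
Proof. by apply: prod_nat_ge1 => i _; apply: prod_nat_ge1 => j; apply: sub_factor_ge1. Qed.

Lemma add_roots_prod_ge1 : t <> TA -> 1 <= add_roots_prod t lam.
Proof.
by move=> t_neqA; apply: prod_nat_ge1 => i _; apply: prod_nat_ge1 => j; apply: add_factor_ge1.
Qed.

Lemma weyl_dim_ge_sub_roots : sub_roots_prod t lam <= weyl_dim t lam.
Proof.
have add_part_ge1 : 1 <= if t is TA then 1 else add_roots_prod t lam.
  by case: t add_roots_prod_ge1 => // ->.
rewrite weyl_dimE ler_peMr ?(le_trans ler01 sub_roots_prod_ge1) //.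
by rewrite mulr_ege1 ?eps_roots_prod_ge1.
Qed.

Lemma weyl_dim_ge_add_roots : t <> TA -> add_roots_prod t lam <= weyl_dim t lam.
Proof.
move=> t_neqA; rewrite weyl_dimE (_ : (if t is TA then 1 else _) = add_roots_prod t lam).
  by rewrite mulrCA ler_peMr ?(le_trans ler01 (add_roots_prod_ge1 t_neqA)) // mulr_ege1
    ?sub_roots_prod_ge1 ?eps_roots_prod_ge1.
by case: t t_neqA.
Qed.
End FactorBounds.

Section RectangleBounds.
Variables (t : classical_type) (r : nat) (lam : 'I_r -> nat).
Hypothesis r_gt2 : (2 < r)%N.
Local Notation N := (ambient_dim t r).

Lemma sub_roots_prod_ge_rows (k : 'I_r) i0 i1 D : (i1 <= k.+1)%N -> (k.+1 < N)%N ->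
  (D <= lam k)%N ->
  \prod_(i0 <= i < i1) ((N - i)%:R / (k.+1 - i + D)%:R) ^+ D <= sub_roots_prod t lam.
Proof.
move=> le_i1k lt_kN le_D; rewrite /sub_roots_prod.
have le_i1N : (i1 <= N)%N by lia.
have factor_ge1 i j : (i < N)%N -> (j < N)%N -> 1 <= sub_factor t lam i j.
  by move=> _; apply: sub_factor_ge1.
apply: (le_trans _ (ler_prod_subrect i0 k.+1 le_i1N (leqnn N) factor_ge1)).
rewrite big_nat_cond [X in _ <= X]big_nat_cond; apply: ler_prod => i /andP[/andP[_ lt_ii1] _].
rewrite exprn_ge0 ?divr_ge0 //= -{2}(add0n k.+1) big_addn.
have -> : (N - i = k.+1 - i + (N - k.+1))%N by lia.
apply: prod_ge_telescope => [|s lt_sL]; first lia.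
have -> : (k.+1 - i + s = s + k.+1 - i)%N by lia.
apply: (sub_factor_ge (k := k) r_gt2) => //; lia.
Qed.

Lemma sub_roots_prod_ge_cols (k : 'I_r) j0 j1 D : (k < j0)%N -> (j1 <= N)%N -> (D <= lam k)%N ->
  \prod_(j0 <= j < j1) (j.+1%:R / (j - k + D)%:R) ^+ D <= sub_roots_prod t lam.
Proof.
move=> lt_kj0 le_j1N le_D; rewrite /sub_roots_prod.
have factor_ge1 i j : (i < N)%N -> (j < N)%N -> 1 <= sub_factor t lam i j.
  by move=> _; apply: sub_factor_ge1.
have le_kN : (k.+1 <= N)%N by have := ltn_ord k; case: (t) => /=; lia.
apply: (le_trans _ (ler_prod_subrect 0 j0 le_kN le_j1N factor_ge1)); rewrite exchange_big_nat.
rewrite big_nat_cond [X in _ <= X]big_nat_cond; apply: ler_prod => j /andP[/andP[le_j0j lt_jj1] _].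
rewrite exprn_ge0 ?divr_ge0 //= big_nat_rev /= add0n.
have -> : (j.+1 = j - k + k.+1)%N by lia.
apply: prod_ge_telescope => [|s lt_sk]; first lia.
have -> : (j - k + s = j - (k.+1 - s.+1))%N by lia.
apply: (sub_factor_ge (k := k) r_gt2) => //; lia.
Qed.

Lemma add_roots_prod_ge_cols (k : 'I_r) i1 j0 j1 D : t <> TA -> (i1 <= k.+1)%N ->
  (i1 <= j0)%N -> (j1 < r)%N -> (D <= lam k)%N ->
  \prod_(j0 <= j < j1) ((r.+1 + (r - j))%:R / ((r - i1).+1 + (r - j) + D)%:R) ^+ D
    <= add_roots_prod t lam.
Proof.
move=> t_neqA le_i1k le_i1j0 lt_j1r le_D; rewrite /add_roots_prod; have lt_kr := ltn_ord k.
have factor_ge1 i j : (i < r)%N -> (j < r)%N -> 1 <= add_factor t lam i j.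
  by move=> _; apply: add_factor_ge1.
have le_i1r : (i1 <= r)%N by lia.
apply: (le_trans _ (ler_prod_subrect 0 j0 le_i1r (ltnW lt_j1r) factor_ge1)).
rewrite exchange_big_nat big_nat_cond [X in _ <= X]big_nat_cond.
apply: ler_prod => j /andP[/andP[le_j0j lt_jj1] _].
rewrite exprn_ge0 ?divr_ge0 //= big_nat_rev /= add0n.
have -> : (r.+1 + (r - j) = (r - i1).+1 + (r - j) + i1)%N by lia.
apply: prod_ge_telescope => [|s lt_si1]; first lia.
have -> : ((r - i1).+1 + (r - j) + s = (r - (i1 - s.+1)) + (r - j))%N by lia.
apply: (add_factor_ge (k := k) r_gt2) => //; lia.
Qed.
End RectangleBounds.

Section LargeCoefficients.
Variables (t : classical_type) (r : nat) (lam : 'I_r -> nat) (n C : nat).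
Hypotheses (r_large : (2 * n + 6 <= r)%N) (C_large : (2 * n + 6 <= C)%N).
Local Notation N := (ambient_dim t r).

Let r_gt2 : (2 < r)%N. Proof. lia. Qed.
Let N_ge_r : (r <= N)%N. Proof. by case: t => /=. Qed.
Let N_le_r1 : (N <= r.+1)%N. Proof. by case: t => /=. Qed.

Lemma weyl_dim_ge_of_inner_coeff (k : 'I_r) : (n < k)%N -> (t = TA -> (k + n.+1 < r)%N) ->
  (0 < lam k)%N -> (r%:R / C%:R) ^+ n.+1 <= weyl_dim t lam.
Proof.
move=> lt_nk inner_A lam_k_gt0; have lt_kr := ltn_ord k.
have rC_ge0 : 0 <= r%:R / C%:R :> rat by rewrite divr_ge0.
case: (leqP k.*2 N) => [le_2kN | lt_N2k].
  apply: (le_trans _ (weyl_dim_ge_sub_roots t lam r_gt2)).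
  apply: (le_trans _ (sub_roots_prod_ge_rows r_gt2 (k - n) (leqnn _) _ lam_k_gt0)); last lia.
  rewrite (_ : n.+1 = k.+1 - (k - n))%N; last lia.
  apply: prodr_ge_expn => // i /andP[le_i lt_i]; rewrite expr1; apply: ler_pdivn; nia.
case: (ltnP (k + n.+1) N) => [lt_kN | le_Nk].
  apply: (le_trans _ (weyl_dim_ge_sub_roots t lam r_gt2)).
  apply: (le_trans _ (sub_roots_prod_ge_cols r_gt2 (j0 := k.+1) (j1 := k + n.+2) _ _
    lam_k_gt0)); try lia.
  rewrite [in X in X <= _](_ : n.+1 = k + n.+2 - k.+1)%N; last lia.
  apply: prodr_ge_expn => // j /andP[le_j lt_j]; rewrite expr1; apply: ler_pdivn; nia.
have t_neqA : t <> TA by move=> tA; move: (inner_A tA) le_Nk; rewrite tA /=; lia.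
apply: (le_trans _ (weyl_dim_ge_add_roots lam r_gt2 t_neqA)).
apply: (le_trans _ (add_roots_prod_ge_cols r_gt2 (i1 := r - n.+2) (j0 := r - n.+2)
  (j1 := r.-1) t_neqA _ _ _ lam_k_gt0)); try lia.
rewrite [in X in X <= _](_ : n.+1 = r.-1 - (r - n.+2))%N; last lia.
apply: prodr_ge_expn => // j /andP[le_j lt_j]; rewrite expr1; apply: ler_pdivn; nia.
Qed.

Lemma weyl_dim_ge_of_large_coeff (k : 'I_r) : (n < lam k)%N ->
  (k <= n)%N \/ (t = TA /\ (r <= k + n.+1)%N) -> (r%:R / C%:R) ^+ n.+1 <= weyl_dim t lam.
Proof.
move=> lt_n_lamk k_near_end; have lt_kr := ltn_ord k.
apply: (le_trans _ (weyl_dim_ge_sub_roots t lam r_gt2)).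
have ler_rC_pdivn u v : (0 < v)%N -> (r * v <= u * C)%N ->
    (r%:R / C%:R) ^+ n.+1 <= (u%:R / v%:R) ^+ n.+1 :> rat.
  by move=> v_gt0 le_rv; rewrite lerXn2r ?nnegrE ?divr_ge0 ?ler_pdivn //; lia.
case: k_near_end => [le_kn | [tA le_rk]].
  apply: (le_trans _ (sub_roots_prod_ge_rows r_gt2 0 (i1 := 1) _ _ lt_n_lamk)); try lia.
  by rewrite big_nat1 !subn0 ler_rC_pdivn; nia.
apply: (le_trans _ (sub_roots_prod_ge_cols r_gt2 (j0 := r) (j1 := N) _ _ lt_n_lamk)) => //.
by move: lt_kr; rewrite tA /= big_nat1 => lt_kr; rewrite ler_rC_pdivn; nia.
Qed.

Lemma coeffs_of_small_weyl_dim : ~ (r%:R / C%:R) ^+ n.+1 <= weyl_dim t lam ->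
  (forall k, lam k <= n)%N /\
  (forall k : 'I_r, n < k -> (t = TA -> k + n.+1 < r) -> lam k = 0)%N.
Proof.
move=> dim_small.
have vanish (k : 'I_r) : (n < k)%N -> (t = TA -> (k + n.+1 < r)%N) -> lam k = 0%N.
  move=> lt_nk inner; apply/eqP; rewrite -leqn0 leqNgt; apply/negP => lam_k_gt0.
  exact: dim_small (weyl_dim_ge_of_inner_coeff lt_nk inner lam_k_gt0).
split=> // k; rewrite leqNgt; apply/negP => lt_n_lamk.
apply: dim_small; apply: (weyl_dim_ge_of_large_coeff lt_n_lamk).
have [le_kn | lt_nk] := leqP k n; [by left | right].
have lam_k_neq0 : lam k <> 0%N by move=> lam_k0; rewrite lam_k0 in lt_n_lamk.
split; first by case: t vanish => // /(_ k lt_nk) vanish_k; case: lam_k_neq0; apply: vanish_k.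
by rewrite leqNgt; apply/negP => inner; apply/lam_k_neq0/vanish.
Qed.
End LargeCoefficients.

Definition bounded_tuples m n : seq (m.-tuple nat) :=
  [seq mktuple (fun i => nat_of_ord (f i)) | f : {ffun 'I_m -> 'I_n.+1}].

Lemma mem_bounded_tuples m n (a : m.-tuple nat) :
  (forall i, tnth a i <= n)%N -> a \in bounded_tuples m n.
Proof.
move=> a_le; apply/mapP; exists [ffun i => inord (tnth a i)]; first by rewrite mem_enum.
by apply: eq_from_tnth => i; rewrite tnth_mktuple ffunE inordK // ltnS a_le.
Qed.

Definition coeff r (lam : 'I_r -> nat) (x : nat) : nat :=
  if insub x is Some k then lam k else 0%N.

Lemma coeffE r (lam : 'I_r -> nat) (k : 'I_r) : coeff lam k = lam k.
Proof. by rewrite /coeff valK. Qed.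

Lemma coeff_le r (lam : 'I_r -> nat) n x : (forall k, lam k <= n)%N -> (coeff lam x <= n)%N.
Proof. by rewrite /coeff; case: insub. Qed.

Lemma nth_mktuple_nat m (f : nat -> nat) k :
  nth 0%N (mktuple (fun i : 'I_m => f i)) k = if (k < m)%N then f k else 0%N.
Proof.
have [lt_km | le_mk] := ltnP k m; last by rewrite nth_default // size_tuple.
by rewrite -[k]/(val (Ordinal lt_km)) nth_mktuple.
Qed.

Lemma coeffs_in_bounded_tuples r m n (lam : 'I_r -> nat) :
  (forall k, lam k <= n)%N -> (forall k : 'I_r, m <= k -> lam k = 0)%N ->
  exists2 a, a \in bounded_tuples m n & forall k : 'I_r, lam k = nth 0%N a k.
Proof.
move=> lam_le lam_eq0; exists (mktuple (fun i : 'I_m => coeff lam i)).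
  by apply: mem_bounded_tuples => i; rewrite tnth_mktuple coeff_le.
by move=> k; rewrite nth_mktuple_nat coeffE; case: ltnP => // /lam_eq0.
Qed.

Lemma coeffs_in_bounded_tuples_ends r m n (lam : 'I_r -> nat) : (m + m <= r)%N ->
  (forall k, lam k <= n)%N -> (forall k : 'I_r, m <= k -> k + m < r -> lam k = 0)%N ->
  exists2 a, a \in bounded_tuples m n & exists2 b, b \in bounded_tuples m n &
    forall k : 'I_r, lam k = (nth 0 a k + nth 0 b (r.-1 - k))%N.
Proof.
move=> le_2mr lam_le lam_eq0.
exists (mktuple (fun i : 'I_m => coeff lam i)).
  by apply: mem_bounded_tuples => i; rewrite tnth_mktuple coeff_le.
exists (mktuple (fun i : 'I_m => coeff lam (r.-1 - i))).
  by apply: mem_bounded_tuples => i; rewrite tnth_mktuple coeff_le.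
move=> k; have lt_kr := ltn_ord k.
rewrite nth_mktuple_nat (nth_mktuple_nat _ (fun x => coeff lam (r.-1 - x))).
have [lt_km | le_mk] := ltnP k m; first by rewrite coeffE ifF ?addn0 //; lia.
have [lt_rkm | le_mrk] := ltnP (r.-1 - k) m.
  by rewrite (_ : r.-1 - (r.-1 - k) = k)%N ?coeffE //; lia.
by rewrite lam_eq0 //; lia.
Qed.

Theorem lemma2p6 (n : nat) (hn : (0 < n)%N) :
  exists (R m : nat) (Lambda : seq (m.-tuple nat)),
  forall (t : classical_type) (r : nat) (lam : 'I_r -> nat),
    (R <= r)%N ->
    @weyl_dim t r lam <= (r ^ n)%:R ->
    if t is TA then
      exists2 a, a \in Lambda & exists2 b, b \in Lambda &
        forall k : 'I_r, lam k = (nth 0 a k + nth 0 b (r.-1 - k))%N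
    else
      exists2 a, a \in Lambda & forall k : 'I_r, lam k = nth 0%N a k.
Proof.
pose C := (2 * n + 6)%N; have C_gt0 : (0 < C)%N by rewrite addn_gt0 orbT.
exists (C ^ n.+1).+1, n.+1, (bounded_tuples n.+1 n) => t r lam lt_Cr dim_le.
have le_C_Cn : (C <= C ^ n.+1)%N by rewrite expnS leq_pmulr // expn_gt0 C_gt0.
have dim_small : ~ (r%:R / C%:R) ^+ n.+1 <= weyl_dim t lam.
  by move=> dim_large; have := natr_expn_lt_div rat C_gt0 lt_Cr; lra.
have r_large : (2 * n + 6 <= r)%N by lia.
have [lam_le lam_eq0] := coeffs_of_small_weyl_dim r_large (leqnn C) dim_small.
case: t lam_eq0 {dim_le dim_small} => lam_eq0.
  by apply: coeffs_in_bounded_tuples_ends => // [|k lt_nk inner]; [lia | apply: lam_eq0].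
all: by apply: coeffs_in_bounded_tuples => // k lt_nk; apply: lam_eq0.
Qed.
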